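(* Suppose the LP relaxation has a unique optimal solution $y^*$ and $y^*(s,1)+y^*(s,0)>0$ for all $s\in\mathbb S$. Then there is a constant $\epsilon_0>0$, depending only on $(\mathbb S,P,r,\alpha)$, such that for every $N$, every policy $\pi$ for the $N$-armed problem and every initial state vector $\mathbf S_0$ for which the long-run averages below exist, $$R^{\mathrm{rel}}-R(\pi,\mathbf S_0)\ge\epsilon_0\lim_{T\to\infty}\frac1T\sum_{t=0}^{T-1}\mathbb E\big[d_{\mathrm{IC}}(Y^\pi_t)\big].$$
   Context: Single-armed MDP $(\mathbb S,\{0,1\},P,r)$, finite $\mathbb S$, budget $\alpha\in(0,1)$. $N$-armed problem ($\alpha N$ integer): arms transition independently by $P$ given states and actions; a policy chooses $A_t(i)\in\{0,1\}$ with $\sum_iA_t(i)=\alpha N$. $R(\pi,\mathbf S_0)=\lim_{T\to\infty}\frac1T\sum_{t<T}\frac1N\sum_i\mathbb E[r(S_t(i),A_t(i))]$. $Y^\pi_t(s,a)=\frac1N\#\{i:S_t(i)=s,A_t(i)=a\}$. LP relaxation: maximize $\sum_{s,a}r(s,a)y(s,a)$ over $y\ge0$ s.t. $\sum_sy(s,1)=\alpha$, $\sum_{s',a}y(s',a)P(s',a,s)=\sum_ay(s,a)$ for all $s$, $\sum_{s,a}y(s,a)=1$; $R^{\mathrm{rel}}$ its optimal value. $S^+=\{s:y^*(s,1)>0,y^*(s,0)=0\}$, $S^-=\{s:y^*(s,1)=0,y^*(s,0)>0\}$, and $d_{\mathrm{IC}}(y)=\sum_{s\in S^+}y(s,0)+\sum_{s\in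 S^-}y(s,1)$. *)

From mathcomp Require Import all_boot all_order all_algebra.
From mathcomp Require Import all_classical all_reals all_analysis.
Set Implicit Arguments. Unset Strict Implicit. Unset Printing Implicit Defensive.
Import Order.TTheory GRing.Theory Num.Theory.
Import numFieldNormedType.Exports.
Local Open Scope ring_scope.

Section RestlessDefs.
Variables (R : realType) (S : finType).

(** ---- Single-armed MDP (S, {0,1}, P, r); action 1 = true, 0 = false ---- *)
Definition is_kernel (P : S -> bool -> S -> R) :=
  (forall s a s', 0 <= P s a s') /\ (forall s a, \sum_(s' : S) P s a s' = 1).

Definition lp_feasible (P : S -> bool -> S -> R) (alpha : R) (y : S -> bool -> R) :=
  [/\ forall s a, 0 <= y s a,
      \sum_(s : S) y s true = alpha,
      forall s, \sum_(s' : S) \sum_(a : bool) y s' a * P s' a s = \sum_(a : bool) y s a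
    & \sum_(s : S) \sum_(a : bool) y s a = 1].

Definition lp_obj (r : S -> bool -> R) (y : S -> bool -> R) :=
  \sum_(s : S) \sum_(a : bool) r s a * y s a.

Definition lp_optimal P r alpha (y : S -> bool -> R) :=
  lp_feasible P alpha y /\ forall y', lp_feasible P alpha y' -> lp_obj r y' <= lp_obj r y.

Definition dIC (ystar : S -> bool -> R) (y : S -> bool -> R) : R :=
  \sum_(s : S | (0 < ystar s true) && (ystar s false == 0)) y s false
  + \sum_(s : S | (ystar s true == 0) && (0 < ystar s false)) y s true.

Definition svec (N : nat) := {ffun 'I_N -> S}.
Definition avec (N : nat) := {ffun 'I_N -> bool}.

(** exactly K = alpha N arms are activated *)
Definition budget_ok (N K : nat) (a : avec N) : bool := #|[set i | a i]| == K.

(** A (randomized, history-dependent) policy: given the past history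
    [(S_0,A_0); ...; (S_{t-1},A_{t-1})] and the current state vector S_t,
    the probability of choosing action vector A_t. *)
Definition policy (N : nat) := seq (svec N * avec N) -> svec N -> avec N -> R.

Definition valid_policy (N K : nat) (pi : policy N) :=
  forall h sv,
    [/\ forall av, 0 <= pi h sv av,
        \sum_(av : avec N) pi h sv av = 1
      & forall av, pi h sv av != 0 -> budget_ok K av].

Definition transN (P : S -> bool -> S -> R) (N : nat) (sv : svec N) (av : avec N)
  (sv' : svec N) : R := \prod_(i < N) P (sv i) (av i) (sv' i).

Definition path_prob (P : S -> bool -> S -> R) (N : nat) (pi : policy N) (S0 : svec N)
  (t : nat) (w : (t.+1).-tuple (svec N * avec N)) : R :=
  ((tnth w ord0).1 == S0)%:R
  * \prod_(k < t.+1) pi (take k w) (tnth w k).1 (tnth w k).2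
  * \prod_(k < t) transN P (tnth w (widen_ord (leqnSn t) k)).1
                           (tnth w (widen_ord (leqnSn t) k)).2
                           (tnth w (lift ord0 k)).1.

Definition expect_t (P : S -> bool -> S -> R) (N : nat) (pi : policy N) (S0 : svec N)
  (t : nat) (g : svec N -> avec N -> R) : R :=
  \sum_(w : (t.+1).-tuple (svec N * avec N))
     path_prob P pi S0 w * g (tnth w ord_max).1 (tnth w ord_max).2.

Definition Yfrac (N : nat) (sv : svec N) (av : avec N) (s : S) (a : bool) : R :=
  #|[set i | (sv i == s) && (av i == a)]|%:R / N%:R.

Definition avg_arm_reward (r : S -> bool -> R) (N : nat) (sv : svec N) (av : avec N) : R :=
  N%:R^-1 * \sum_(i < N) r (sv i) (av i).

Definition cesaro (u : nat -> R) : R^nat := fun T => T%:R^-1 * \sum_(t < T) u t.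

Definition reward_seq P r N (pi : policy N) S0 : R^nat :=
  cesaro (fun t => expect_t P pi S0 t (avg_arm_reward r (N:=N))).

Definition dIC_seq P (ystar : S -> bool -> R) N (pi : policy N) S0 : R^nat :=
  cesaro (fun t => expect_t P pi S0 t (fun sv av => dIC ystar (Yfrac sv av))).

End RestlessDefs.

(* Let y_t(s, a) be the expectation of Y_t(s, a) and ybar_T its Cesaro average over t < T.
   Each ybar_T is nonnegative, has mass 1 and budget alpha, and violates the flow-balance
   constraints of the LP only by 1/T per state, because the y_t satisfy y_{t+1} = y_t P in
   the aggregate and the defect telescopes.  Uniqueness of the optimum ystar makes the LP
   sharp: for every direction u that is nonnegative where ystar vanishes,
   max(-r.u, residual(u)) is positive on the l1 unit sphere, hence by compactness at least
   m |u|_1.  This gives, for y >= 0,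
     eps |y - ystar|_1 <= r.ystar - r.y + C residual(y - ystar),
   and d_IC(y) <= |y - ystar|_1 since d_IC only charges pairs where ystar vanishes.
   Applied to ybar_T, the bound passes to the limit T -> oo. *)

From Pilot Require Import Defs.
From mathcomp Require Import all_boot all_order all_algebra.
From mathcomp Require Import all_classical all_reals all_analysis.
From mathcomp Require Import ring lra.
Set Implicit Arguments. Unset Strict Implicit. Unset Printing Implicit Defensive.
Import Order.TTheory GRing.Theory Num.Theory.
Import numFieldNormedType.Exports.
Local Open Scope ring_scope.

Section LinearFunctional.
Variables (R : realType) (S : finType).
Implicit Types (c y z : S -> bool -> R).

Definition l1norm y : R := \sum_(s : S) \sum_(a : bool) `|y s a|.

Lemma l1norm_ge0 y : 0 <= l1norm y.
Proof. by apply: sumr_ge0 => s _; apply: sumr_ge0. Qed.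

Lemma ler_l1norm y s a : `|y s a| <= l1norm y.
Proof.
rewrite /l1norm (bigD1 s) //= (bigD1 a) //= -addrA lerDl.
by apply: addr_ge0; apply: sumr_ge0 => *; [|apply: sumr_ge0].
Qed.

Lemma lp_objD c y z :
  lp_obj c (fun s a => y s a + z s a) = lp_obj c y + lp_obj c z.
Proof.
rewrite /lp_obj -big_split; apply: eq_bigr => s _.
by rewrite -big_split; apply: eq_bigr => a _; rewrite mulrDr.
Qed.

Lemma lp_objZ c k y : lp_obj c (fun s a => k * y s a) = k * lp_obj c y.
Proof.
rewrite /lp_obj mulr_sumr; apply: eq_bigr => s _.
by rewrite mulr_sumr; apply: eq_bigr => a _; rewrite mulrCA.
Qed.

Lemma lp_objB c y z :
  lp_obj c (fun s a => y s a - z s a) = lp_obj c y - lp_obj c z.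
Proof.
rewrite -mulN1r -lp_objZ -lp_objD /lp_obj.
by apply: eq_bigr => s _; apply: eq_bigr => a _; rewrite mulN1r.
Qed.

Lemma lp_obj_sum (I : Type) (rI : seq I) c (F : I -> S -> bool -> R) :
  lp_obj c (fun s a => \sum_(i <- rI) F i s a) = \sum_(i <- rI) lp_obj c (F i).
Proof.
rewrite /lp_obj [RHS]exchange_big; apply: eq_bigr => s _.
by rewrite [RHS]exchange_big; apply: eq_bigr => a _; rewrite mulr_sumr.
Qed.

Lemma lp_obj_norm_le c y : `|lp_obj c y| <= l1norm c * l1norm y.
Proof.
apply: le_trans (ler_norm_sum _ _ _) _; rewrite /l1norm mulr_suml.
apply: ler_sum => s _; apply: le_trans (ler_norm_sum _ _ _) _.
rewrite mulr_suml; apply: ler_sum => a _.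
by rewrite normrM ler_wpM2l ?ler_l1norm.
Qed.

Definition mass_weight : S -> bool -> R := fun _ _ => 1.
Definition budget_weight : S -> bool -> R := fun _ a => a%:R.

Lemma lp_obj_mass y : lp_obj mass_weight y = \sum_(s : S) \sum_(a : bool) y s a.
Proof. by apply: eq_bigr => s _; apply: eq_bigr => a _; rewrite mul1r. Qed.

Lemma lp_obj_budget y : lp_obj budget_weight y = \sum_(s : S) y s true.
Proof. by apply: eq_bigr => s _; rewrite big_bool /= mul1r mul0r addr0. Qed.

Lemma l1normZ k y : l1norm (fun s a => k * y s a) = `|k| * l1norm y.
Proof.
rewrite /l1norm mulr_sumr; apply: eq_bigr => s _.
by rewrite mulr_sumr; apply: eq_bigr => a _; rewrite normrM.
Qed.

Import ArrowAsProduct.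

Lemma continuous_sum (T : topologicalType) (J : finType) (F : J -> T -> R) :
  (forall j, continuous (F j)) -> continuous (fun x => \sum_j F j x).
Proof. by move=> F_cont; apply: continuous_big => //; exact: add_continuous. Qed.

Lemma lp_obj_curry_continuous c :
  continuous (fun v : S * bool -> R => lp_obj c (curry v)).
Proof.
apply: continuous_sum => s; apply: continuous_sum => a.
move: (@proj_continuous _ (fun _ => R) (s, a)) => proj_cont v.
exact: (cvgM (cvg_cst (c s a)) (proj_cont v)).
Qed.

Lemma l1norm_curry_continuous :
  continuous (fun v : S * bool -> R => l1norm (curry v)).
Proof.
apply: continuous_sum => s; apply: continuous_sum => a.
move: (@proj_continuous _ (fun _ => R) (s, a)) => proj_cont v.
exact: (cvg_norm (proj_cont v)).
Qed.

End LinearFunctional.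

Arguments mass_weight {R S}.
Arguments budget_weight {R S}.

Section ErrorBound.
Variables (R : realType) (S : finType) (P : S -> bool -> S -> R)
  (r : S -> bool -> R) (alpha : R) (ystar : S -> bool -> R).
Implicit Types (u y : S -> bool -> R).

Definition flow_weight (s s' : S) (a : bool) : R := P s' a s - (s' == s)%:R.

Lemma lp_obj_flow_weight y s : lp_obj (flow_weight s) y =
  \sum_(s' : S) \sum_(a : bool) y s' a * P s' a s - \sum_(a : bool) y s a.
Proof.
transitivity (\sum_(s' : S) (\sum_(a : bool) y s' a * P s' a s
                        - \sum_(a : bool) (s' == s)%:R * y s' a)).
  apply: eq_bigr => s' _; rewrite -sumrB; apply: eq_bigr => a _.
  by rewrite /flow_weight mulrBl mulrC.
rewrite sumrB; congr (_ - _).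
rewrite (bigD1 s) //= [X in _ + X]big1 => [|s' /negbTE s's].
  by rewrite addr0; apply: eq_bigr => a _; rewrite eqxx mul1r.
by apply: big1 => a _; rewrite s's mul0r.
Qed.

Lemma lp_feasibleE y : lp_feasible P alpha y <->
  [/\ forall s a, 0 <= y s a, lp_obj budget_weight y = alpha,
      forall s, lp_obj (flow_weight s) y = 0 & lp_obj mass_weight y = 1].
Proof.
rewrite lp_obj_budget lp_obj_mass.
have flowE s : (\sum_(s' : S) \sum_(a : bool) y s' a * P s' a s = \sum_(a : bool) y s a)
    <-> lp_obj (flow_weight s) y = 0.
  by rewrite lp_obj_flow_weight; split => [->|/eqP]; rewrite ?subrr // subr_eq0 => /eqP.
by split => -[y_ge0 bud flow mass]; split => // s; apply/flowE.
Qed.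

Definition lp_residual u : R :=
  `|lp_obj budget_weight u| + `|lp_obj mass_weight u|
  + \sum_(s : S) `|lp_obj (flow_weight s) u|.

Lemma lp_residual_ge0 u : 0 <= lp_residual u.
Proof. by rewrite !addr_ge0 ?sumr_ge0. Qed.

Lemma lp_residualZ k u : 0 <= k -> lp_residual (fun s a => k * u s a) = k * lp_residual u.
Proof.
move=> k_ge0; rewrite /lp_residual !lp_objZ !normrM (ger0_norm k_ge0) !mulrDr mulr_sumr.
by congr (_ + _); apply: eq_bigr => s _; rewrite lp_objZ normrM ger0_norm.
Qed.

Lemma lp_residual_eq0 u : lp_residual u = 0 ->
  [/\ lp_obj budget_weight u = 0, forall s, lp_obj (flow_weight s) u = 0
    & lp_obj mass_weight u = 0].
Proof.
move/eqP; rewrite /lp_residual !paddr_eq0 ?addr_ge0 ?sumr_ge0 //.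
rewrite !normr_eq0 => /andP[/andP[/eqP bud0 /eqP mass0] /eqP flow0]; split => // s.
by apply/eqP; rewrite -normr_eq0; apply/eqP; move: s isT; apply: psumr_eq0P flow0.
Qed.

Definition lp_gauge u : R := Num.max (- lp_obj r u) (lp_residual u).

Lemma lp_gaugeZ k u : 0 <= k -> lp_gauge (fun s a => k * u s a) = k * lp_gauge u.
Proof. by move=> k_ge0; rewrite /lp_gauge lp_objZ lp_residualZ // maxr_pMr ?mulrN. Qed.

Import ArrowAsProduct.

Lemma lp_gauge_curry_continuous :
  continuous (fun v : S * bool -> R => lp_gauge (curry v)).
Proof.
have obj_cont := @lp_obj_curry_continuous R S.
have res_cont : continuous (fun v : S * bool -> R => lp_residual (curry v)).
  have norm_cont c : continuous (fun v : S * bool -> R => `|lp_obj c (curry v)|).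
    by move=> v; exact: (cvg_norm (obj_cont c v)).
  have flow_cont : continuous (fun v : S * bool -> R =>
      \sum_(s : S) `|lp_obj (flow_weight s) (curry v)|).
    by apply: continuous_sum => s; exact: norm_cont.
  move=> v; exact: (cvgD (cvgD (norm_cont _ v) (norm_cont _ v)) (flow_cont v)).
move=> v; exact: (continuous_max (cvgN (obj_cont r v)) (res_cont v)).
Qed.

Hypothesis ystar_opt : lp_optimal P r alpha ystar.
Hypothesis ystar_unique :
  forall y, lp_optimal P r alpha y -> forall s a, y s a = ystar s a.

Definition lp_cone u := forall s a, ystar s a = 0 -> 0 <= u s a.

Lemma lp_gauge_gt0 u : lp_cone u -> l1norm u = 1 -> 0 < lp_gauge u.
Proof.
move=> u_cone u_unit; rewrite ltNge; apply/negP.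
rewrite ge_max oppr_le0 => /andP[obj_ge0 res_le0].
have /lp_residual_eq0[bud0 flow0 mass0] : lp_residual u = 0.
  by apply/eqP; rewrite eq_le res_le0 lp_residual_ge0.
have [ystar_feas ystar_max] := ystar_opt.
have /lp_feasibleE[ystar_ge0 ystar_bud ystar_flow ystar_mass] := ystar_feas.
pose t := \big[Num.min/1]_(p : S * bool | 0 < ystar p.1 p.2) ystar p.1 p.2.
have t_gt0 : 0 < t by apply/bigmin_gtP.
pose y' s a := ystar s a + t * u s a.
(* Moving from ystar along t u keeps feasibility without lowering the objective,
   so uniqueness of the optimum forces u = 0. *)
have y'_feas : lp_feasible P alpha y'.
  apply/lp_feasibleE; split => [s a||s|];
    rewrite ?lp_objD ?lp_objZ ?bud0 ?flow0 ?mass0 ?mulr0 ?addr0 //.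
  have [ys0|ys_neq0] := eqVneq (ystar s a) 0.
    by rewrite /y' ys0 add0r; apply: mulr_ge0; [exact: ltW | exact: u_cone].
  have t_le : t <= ystar s a.
    by rewrite /t (bigmin_le_cond _ (j := (s, a))) //= lt_neqAle eq_sym ys_neq0 ystar_ge0.
  have := ler_l1norm u s a; rewrite u_unit ler_norml => /andP[u_ge _].
  rewrite /y'; nra.
have y'_opt : lp_optimal P r alpha y'.
  split => // y'' /ystar_max /le_trans; apply.
  by rewrite /y' lp_objD lp_objZ lerDl; apply: mulr_ge0 => //; exact: ltW.
have u0 s a : u s a = 0.
  have := ystar_unique y'_opt s a; rewrite /y' -[RHS]addr0 => /addrI /eqP.
  by rewrite mulf_eq0 gt_eqF //= => /eqP.
move: u_unit; rewrite /l1norm big1 => [/eqP|s _]; first by rewrite eq_sym oner_eq0.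
by apply: big1 => a _; rewrite u0 normr0.
Qed.

Lemma lp_gauge_ge_l1norm_of_unit m u :
  (forall w, lp_cone w -> l1norm w = 1 -> m <= lp_gauge w) ->
  lp_cone u -> m * l1norm u <= lp_gauge u.
Proof.
move=> m_le u_cone; have [u0|u_neq0] := eqVneq (l1norm u) 0.
  by rewrite u0 mulr0 le_max lp_residual_ge0 orbT.
have l1_gt0 : 0 < l1norm u by rewrite lt_neqAle eq_sym u_neq0 l1norm_ge0.
pose w s a := (l1norm u)^-1 * u s a.
have w_cone : lp_cone w.
  by move=> s a ys0; rewrite mulr_ge0 ?invr_ge0 ?l1norm_ge0 ?u_cone.
have w_unit : l1norm w = 1 by rewrite l1normZ ger0_norm ?invr_ge0 ?mulVf ?ltW.
have := m_le _ w_cone w_unit.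
by rewrite /w lp_gaugeZ ?invr_ge0 ?l1norm_ge0 // ler_pdivlMl // mulrC.
Qed.

Lemma lp_gauge_ge_l1norm :
  exists2 m, 0 < m & forall u, lp_cone u -> m * l1norm u <= lp_gauge u.
Proof.
suff [m m_gt0 m_le] : exists2 m, 0 < m &
    forall w, lp_cone w -> l1norm w = 1 -> m <= lp_gauge w.
  by exists m => // u; apply: lp_gauge_ge_l1norm_of_unit.
pose lo (p : S * bool) : R := if ystar p.1 p.2 == 0 then 0 else -1.
pose box := [set v : S * bool -> R | forall p, `[lo p, 1] (v p)]%classic.
pose sphere := (box `&` [set v | l1norm (curry v) = 1])%classic.
have sphere_cone v : sphere v -> lp_cone (curry v).
  by move=> [box_v _] s a ys0; have := box_v (s, a); rewrite /lo /= ys0 eqxx in_itv => /andP[].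
have sphere_uncurry w : lp_cone w -> l1norm w = 1 -> sphere (uncurry w).
  move=> w_cone w_unit; split => // -[s a]; rewrite /= in_itv /=.
  have := ler_l1norm w s a; rewrite w_unit ler_norml => /andP[w_ge ->].
  by rewrite andbT /lo /=; case: ifPn => [/eqP /w_cone|_].
have [[v0 sphere_v0]|sphere0] := pselect (sphere !=set0)%classic; last first.
  by exists 1 => // w w_cone w_unit; case: sphere0; exists (uncurry w); exact: sphere_uncurry.
have box_compact : compact box.
  exact: (@tychonoff _ (fun _ => R) (fun p => `[lo p, 1]%classic)
    (fun p => @segment_compact R _ _)).
have sphere_compact : compact sphere.
  apply: compact_closedI box_compact _.
  have l1_cont : continuous (fun v : S * bool -> R => l1norm (curry v)) :=
    @l1norm_curry_continuous R S.
  have closed1 : closed [set x : R | x = 1] by exact: closed_eq.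
  by move/continuous_closedP: l1_cont => /(_ _ closed1).
have gauge_cont : continuous (fun v : S * bool -> R => lp_gauge (curry v)) :=
  @lp_gauge_curry_continuous.
have [c /set_mem sphere_c c_min] := compact_EVT_min (ex_intro _ v0 sphere_v0)
  sphere_compact (continuous_subspaceT gauge_cont).
exists (lp_gauge (curry c)).
  by apply: lp_gauge_gt0; [exact: sphere_cone | case: sphere_c].
by move=> w w_cone w_unit; apply: (c_min (uncurry w)); apply/mem_set; exact: sphere_uncurry.
Qed.

Lemma lp_error_bound : exists eps C : R, [/\ 0 < eps, 0 <= C &
  forall u, lp_cone u -> eps * l1norm u <= - lp_obj r u + C * lp_residual u].
Proof.
have [m m_gt0 m_le] := lp_gauge_ge_l1norm.
pose C := (l1norm r + m) / m.
have C_ge0 : 0 <= C by rewrite divr_ge0 ?addr_ge0 ?l1norm_ge0 ?ltW.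
have Cm : C * m = l1norm r + m by rewrite divfK ?gt_eqF.
exists m, C; split => // u u_cone.
have obj_le : lp_obj r u <= l1norm r * l1norm u.
  exact: le_trans (ler_norm _) (lp_obj_norm_le r u).
have res_ge0 := lp_residual_ge0 u.
have CMres := mulr_ge0 C_ge0 res_ge0.
move: (m_le u u_cone); rewrite le_max => /orP[|res_ge]; first lra.
have := ler_wpM2l C_ge0 res_ge; rewrite mulrA Cm; lra.
Qed.

End ErrorBound.

Section IncorrectActivation.
Variables (R : realType) (S : finType) (ystar : S -> bool -> R).
Implicit Types (y : S -> bool -> R).

Definition dIC_weight (s : S) (a : bool) : R :=
  if a then ((ystar s true == 0) && (0 < ystar s false))%:R
  else ((0 < ystar s true) && (ystar s false == 0))%:R.

Lemma dICE y : dIC ystar y = lp_obj dIC_weight y.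
Proof.
rewrite /lp_obj (eq_bigr (fun s => dIC_weight s true * y s true
  + dIC_weight s false * y s false)) => [|s _]; last by rewrite big_bool.
rewrite big_split /= addrC /dIC; congr (_ + _); rewrite big_mkcond /=.
  by apply: eq_bigr => s _; rewrite /dIC_weight; case: ifP; rewrite ?mul1r ?mul0r.
by apply: eq_bigr => s _; rewrite /dIC_weight; case: ifP; rewrite ?mul1r ?mul0r.
Qed.

Lemma dIC_le_l1norm y : dIC ystar y <= l1norm (fun s a => y s a - ystar s a).
Proof.
have weight_ystar s a : dIC_weight s a * ystar s a = 0.
  rewrite /dIC_weight; case: a => /=.
    by have [->|_] := eqVneq (ystar s true) 0; rewrite ?mulr0 ?mul0r.
  by have [->|_] := eqVneq (ystar s false) 0; rewrite ?mulr0 ?andbF ?mul0r.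
have ystar0 : lp_obj dIC_weight ystar = 0.
  by apply: big1 => s _; apply: big1 => a _; exact: weight_ystar.
rewrite dICE -[lp_obj _ y]subr0 -ystar0 -lp_objB; apply: ler_sum => s _; apply: ler_sum => a _.
apply: le_trans (ler_norm _) _; rewrite normrM ler_piMl //.
by rewrite /dIC_weight; case: a; case: (_ && _); rewrite /= ?mulr1n ?mulr0n ?normr1 ?normr0.
Qed.

End IncorrectActivation.

Lemma lp_residual_sub (R : realType) (S : finType) P (r : S -> bool -> R) alpha ystar y :
  lp_optimal P r alpha ystar ->
  lp_obj budget_weight y = alpha -> lp_obj mass_weight y = 1 ->
  lp_residual P (fun s a => y s a - ystar s a) = \sum_(s : S) `|lp_obj (flow_weight P s) y|.
Proof.
move=> [/lp_feasibleE[_ ystar_bud ystar_flow ystar_mass] _] y_bud y_mass.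
rewrite /lp_residual !lp_objB ystar_bud ystar_mass y_bud y_mass !subrr normr0 !add0r.
by apply: eq_bigr => s _; rewrite lp_objB ystar_flow subr0.
Qed.

Lemma big_tuple_rcons (V : nmodType) (T : finType) n (F : n.+2.-tuple T -> V) :
  \sum_(w : n.+2.-tuple T) F w =
  \sum_(w : n.+1.-tuple T) \sum_(x : T) F [tuple of rcons w x].
Proof.
rewrite pair_bigA /= (reindex (fun p : n.+1.-tuple T * T => [tuple of rcons p.1 p.2])) //.
exists (fun w : n.+2.-tuple T =>
  ([tuple of belast (thead w) (behead w)], last (thead w) (behead w))).
  move=> [w x] _ /=; case/tupleP: w => w0 ws; rewrite /thead (tnth_nth w0) /=.
  by congr (_, _); [apply: val_inj; rewrite /= belast_rcons | rewrite last_rcons].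
by move=> w _; case/tupleP: w => x t; apply: val_inj; rewrite /= -lastI.
Qed.

Lemma tnth_rcons (T : Type) n (w : n.-tuple T) x (i : 'I_n.+1) :
  tnth [tuple of rcons w x] i = if (i < n)%N then nth x w i else x.
Proof.
by rewrite (tnth_nth x) /= nth_rcons size_tuple if_same.
Qed.

Lemma natr_card_set (R : pzSemiRingType) (I : finType) (p : pred I) :
  #|[set i | p i]|%:R = \sum_(i : I) (p i)%:R :> R.
Proof.
by rewrite -sum1_card natr_sum big_mkcond; apply: eq_bigr => i _; rewrite inE; case: (p i).
Qed.

Lemma cesaro_cst (R : realType) (k : R) T : (0 < T)%N -> Defs.cesaro (fun=> k) T = k.
Proof.
move=> T_gt0; rewrite /Defs.cesaro sumr_const card_ord -[k *+ T]mulr_natr.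
by rewrite mulrCA mulVf ?mulr1 // pnatr_eq0 -lt0n.
Qed.

Section Occupation.
Variables (R : realType) (S : finType) (P : S -> bool -> S -> R) (N : nat)
  (pi : policy R S N) (S0 : svec S N).
Local Notation step := (svec S N * avec N)%type.

Lemma path_prob_rcons t (w : t.+1.-tuple step) (x : step) :
  path_prob P pi S0 [tuple of rcons w x] =
  path_prob P pi S0 w * pi w x.1 x.2
  * transN P (tnth w ord_max).1 (tnth w ord_max).2 x.1.
Proof.
have take_rcons k : (k <= t.+1)%N -> take k (rcons w x) = take k w.
  by move=> k_le; rewrite -cats1 takel_cat // size_tuple.
have pi_rcons : \prod_(k < t.+2) pi (take k [tuple of rcons w x])
      (tnth [tuple of rcons w x] k).1 (tnth [tuple of rcons w x] k).2 =
    \prod_(k < t.+1) pi (take k w) (tnth w k).1 (tnth w k).2 * pi w x.1 x.2.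
  rewrite big_ord_recr /= take_rcons // take_oversize ?size_tuple //.
  rewrite tnth_rcons /= ltnn; congr (_ * _); apply: eq_bigr => k _.
  by rewrite tnth_rcons /= ltn_ord take_rcons ?(tnth_nth x) // ltnW.
have trans_rcons : \prod_(k < t.+1) transN P
      (tnth [tuple of rcons w x] (widen_ord (leqnSn t.+1) k)).1
      (tnth [tuple of rcons w x] (widen_ord (leqnSn t.+1) k)).2
      (tnth [tuple of rcons w x] (lift ord0 k)).1 =
    \prod_(k < t) transN P (tnth w (widen_ord (leqnSn t) k)).1
                           (tnth w (widen_ord (leqnSn t) k)).2
                           (tnth w (lift ord0 k)).1
    * transN P (tnth w ord_max).1 (tnth w ord_max).2 x.1.
  rewrite big_ord_recr /= !tnth_rcons /= ltnSn ltnn !(tnth_nth x); congr (_ * _).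
  apply: eq_bigr => k _; rewrite !tnth_rcons /= !(tnth_nth x) /=.
  by rewrite (ltn_trans (ltn_ord k)) // ltnS ltn_ord.
have head_rcons : tnth [tuple of rcons w x] ord0 = tnth w ord0.
  by rewrite tnth_rcons /= (tnth_nth x).
by rewrite /path_prob pi_rcons trans_rcons head_rcons; ring.
Qed.

Hypothesis P_kernel : is_kernel P.

Lemma transN_sum sv av : \sum_(sv' : svec S N) transN P sv av sv' = 1.
Proof.
rewrite /transN -(bigA_distr_bigA (fun i s' => P (sv i) (av i) s')) /=.
by apply: big1 => i _; case: P_kernel => _ ->.
Qed.

Lemma transN_marginal sv av (j : 'I_N) s :
  \sum_(sv' : svec S N) transN P sv av sv' * (sv' j == s)%:R = P (sv j) (av j) s.
Proof.
pose F (i : 'I_N) (x : S) := P (sv i) (av i) x * (if i == j then (x == s)%:R else 1).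
transitivity (\sum_(sv' : svec S N) \prod_(i < N) F i (sv' i)).
  apply: eq_bigr => sv' _; rewrite /F /transN big_split /=; congr (_ * _).
  rewrite -big_mkcond /=.
  by rewrite (big_pred1 j) //= => i; rewrite /= eq_sym.
rewrite -(bigA_distr_bigA F) /= (bigD1 j) //= [X in _ * X]big1 => [|i /negbTE ij].
  rewrite mulr1 /F eqxx (bigD1 s) //= eqxx mulr1 big1 ?addr0 // => x /negbTE xs.
  by rewrite xs mulr0.
by rewrite /F ij; under eq_bigr do rewrite mulr1; case: P_kernel => _ ->.
Qed.

Variable K : nat.
Hypothesis pi_valid : valid_policy K pi.

Lemma expect_t_ext t (g g' : svec S N -> avec N -> R) :
  (forall sv av, g sv av = g' sv av) -> expect_t P pi S0 t g = expect_t P pi S0 t g'.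
Proof. by move=> gg'; apply: eq_bigr => w _; rewrite gg'. Qed.

Lemma expect_t_step t (G : svec S N -> R) :
  expect_t P pi S0 t.+1 (fun sv _ => G sv) =
  expect_t P pi S0 t (fun sv av => \sum_(sv' : svec S N) transN P sv av sv' * G sv').
Proof.
rewrite /expect_t big_tuple_rcons; apply: eq_bigr => w _.
transitivity (\sum_(sv : svec S N) \sum_(av : avec N) pi w sv av *
  (path_prob P pi S0 w * transN P (tnth w ord_max).1 (tnth w ord_max).2 sv * G sv)).
  rewrite pair_bigA; apply: eq_bigr => -[sv av] _.
  by rewrite path_prob_rcons tnth_rcons /= ltnn; ring.
rewrite mulr_sumr; apply: eq_bigr => sv _.
by rewrite -mulr_suml; case: (pi_valid w sv) => _ -> _; ring.
Qed.

Lemma expect_tZ t k (g : svec S N -> avec N -> R) :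
  expect_t P pi S0 t (fun sv av => k * g sv av) = k * expect_t P pi S0 t g.
Proof. by rewrite /expect_t mulr_sumr; apply: eq_bigr => w _; rewrite mulrCA. Qed.

Lemma expect_t_cst t k : expect_t P pi S0 t (fun _ _ => k) = k.
Proof.
rewrite -[in RHS](mulr1 k) -[in LHS](mulr1 k) expect_tZ; congr (_ * _).
elim: t => [|t IH].
  rewrite /expect_t (reindex (fun x : step => [tuple x])) /=; last first.
    exists (fun w : 1.-tuple step => thead w) => [x _ //|w _].
    by case/tupleP: w => x t; apply: val_inj; rewrite /= tuple0.
  transitivity (\sum_(sv : svec S N) \sum_(av : avec N) (sv == S0)%:R * pi [::] sv av).
    rewrite pair_bigA; apply: eq_bigr => -[sv av] _.
    by rewrite /path_prob big_ord1 big_ord0 !(tnth_nth (sv, av)) /= !mulr1.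
  rewrite (bigD1 S0) //= [X in _ + X]big1 => [|sv /negbTE svS0]; last first.
    by apply: big1 => av _; rewrite svS0 mul0r.
  by rewrite addr0 eqxx -mulr_sumr mul1r; case: (pi_valid [::] S0).
rewrite -[in RHS]IH expect_t_step; apply: expect_t_ext => sv av.
by under eq_bigr do rewrite mulr1; rewrite transN_sum.
Qed.

Lemma path_prob_ge0 t (w : t.+1.-tuple step) : 0 <= path_prob P pi S0 w.
Proof.
rewrite /path_prob !mulr_ge0 ?ler0n //.
  by apply: prodr_ge0 => k _; case: (pi_valid (take k w) (tnth w k).1).
by apply: prodr_ge0 => k _; apply: prodr_ge0 => i _; case: P_kernel.
Qed.

Lemma expect_t_budget t (g g' : svec S N -> avec N -> R) :
  (forall sv av, budget_ok K av -> g sv av = g' sv av) ->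
  expect_t P pi S0 t g = expect_t P pi S0 t g'.
Proof.
move=> gg'; apply: eq_bigr => w _.
have [pi0|pi_neq0] := eqVneq (pi (take t w) (tnth w ord_max).1 (tnth w ord_max).2) 0.
  by rewrite /path_prob (bigD1 ord_max) //= pi0 mul0r mulr0 !mul0r.
case: (pi_valid (take t w) (tnth w ord_max).1) => _ _ /(_ _ pi_neq0) budget.
by rewrite gg'.
Qed.

Lemma lp_obj_Yfrac c (sv : svec S N) (av : avec N) :
  lp_obj c (Yfrac R sv av) = N%:R^-1 * \sum_(i < N) c (sv i) (av i).
Proof.
transitivity (\sum_(i < N) \sum_(s : S) \sum_(a : bool)
    N%:R^-1 * (((sv i == s) && (av i == a))%:R * c s a)); last first.
  rewrite mulr_sumr; apply: eq_bigr => i _.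
  rewrite (bigD1 (sv i)) //= [X in _ + X]big1 => [|s /negbTE svs]; last first.
    by apply: big1 => a _; rewrite eq_sym svs mul0r mulr0.
  rewrite addr0 (bigD1 (av i)) //= [X in _ + X]big1 => [|a /negbTE ava].
    by rewrite !eqxx mul1r addr0.
  by rewrite eq_sym ava andbF mul0r mulr0.
rewrite exchange_big; apply: eq_bigr => s _; rewrite exchange_big; apply: eq_bigr => a _.
by rewrite /Yfrac natr_card_set -mulr_sumr -mulr_suml; ring.
Qed.

Definition occupation t s a := expect_t P pi S0 t (fun sv av => Yfrac R sv av s a).

Lemma expect_t_lp_obj t c :
  expect_t P pi S0 t (fun sv av => lp_obj c (Yfrac R sv av)) = lp_obj c (occupation t).
Proof.
by rewrite /occupation /expect_t lp_obj_sum; apply: eq_bigr => w _; rewrite lp_objZ.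
Qed.

Lemma occupation_ge0 t s a : 0 <= occupation t s a.
Proof. by apply: sumr_ge0 => w _; rewrite mulr_ge0 ?path_prob_ge0 ?divr_ge0. Qed.

Lemma occupation_next t s : \sum_(a : bool) occupation t.+1 s a =
  \sum_(s' : S) \sum_(a : bool) occupation t s' a * P s' a s.
Proof.
transitivity (lp_obj (fun s' _ => (s' == s)%:R) (occupation t.+1)).
  rewrite /lp_obj (bigD1 s) //= [X in _ = _ + X]big1 => [|s' /negbTE s's].
    by rewrite addr0; apply: eq_bigr => a _; rewrite eqxx mul1r.
  by apply: big1 => a _; rewrite s's mul0r.
transitivity (lp_obj (fun s' a => P s' a s) (occupation t)); last first.
  by apply: eq_bigr => s' _; apply: eq_bigr => a _; rewrite mulrC.
rewrite -!expect_t_lp_obj.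
under expect_t_ext do rewrite lp_obj_Yfrac.
rewrite expect_t_step; apply: expect_t_ext => sv av; rewrite lp_obj_Yfrac.
transitivity (N%:R^-1 * \sum_(i < N) \sum_(sv' : svec S N)
    transN P sv av sv' * (sv' i == s)%:R).
  rewrite [X in _ = _ * X]exchange_big mulr_sumr; apply: eq_bigr => sv' _.
  by rewrite mulrCA mulr_sumr.
by congr (_ * _); apply: eq_bigr => i _; rewrite transN_marginal.
Qed.

Hypothesis N_gt0 : (0 < N)%N.

Lemma occupation_mass t : lp_obj mass_weight (occupation t) = 1.
Proof.
rewrite -expect_t_lp_obj -[RHS](expect_t_cst t 1); apply: expect_t_ext => sv av.
by rewrite lp_obj_Yfrac sumr_const card_ord mulVf // pnatr_eq0 -lt0n.
Qed.

Variable alpha : R.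
Hypothesis K_eq : K%:R = alpha * N%:R.

Lemma occupation_budget t : lp_obj budget_weight (occupation t) = alpha.
Proof.
rewrite -expect_t_lp_obj -[RHS](expect_t_cst t alpha).
apply: expect_t_budget => sv av /eqP card_av.
rewrite lp_obj_Yfrac -(natr_card_set R av) card_av K_eq mulrC mulfK //.
by rewrite pnatr_eq0 -lt0n.
Qed.

Definition avg_occupation T s a := T%:R^-1 * \sum_(t < T) occupation t s a.

Lemma lp_obj_avg_occupation c T :
  lp_obj c (avg_occupation T) = Defs.cesaro (fun t => lp_obj c (occupation t)) T.
Proof. by rewrite lp_objZ lp_obj_sum. Qed.

Lemma avg_occupation_ge0 T s a : 0 <= avg_occupation T s a.
Proof. by rewrite mulr_ge0 ?invr_ge0 ?sumr_ge0 // => t _; exact: occupation_ge0. Qed.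

Lemma avg_occupation_mass T : (0 < T)%N -> lp_obj mass_weight (avg_occupation T) = 1.
Proof.
move=> T_gt0; rewrite lp_obj_avg_occupation -[RHS](cesaro_cst 1 T_gt0).
by congr Defs.cesaro; apply/funext => t; exact: occupation_mass.
Qed.

Lemma avg_occupation_budget T :
  (0 < T)%N -> lp_obj budget_weight (avg_occupation T) = alpha.
Proof.
move=> T_gt0; rewrite lp_obj_avg_occupation -[RHS](cesaro_cst alpha T_gt0).
by congr Defs.cesaro; apply/funext => t; exact: occupation_budget.
Qed.

Lemma avg_occupation_flow T s :
  `|lp_obj (flow_weight P s) (avg_occupation T)| <= T%:R^-1.
Proof.
pose q t := \sum_(a : bool) occupation t s a.
have q_01 t : 0 <= q t <= 1.
  rewrite sumr_ge0 => [|a _]; last exact: occupation_ge0.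
  rewrite -(occupation_mass t) lp_obj_mass (bigD1 s) //= lerDl.
  by apply: sumr_ge0 => s' _; apply: sumr_ge0 => a _; exact: occupation_ge0.
rewrite lp_obj_avg_occupation /Defs.cesaro.
under eq_bigr do rewrite lp_obj_flow_weight -occupation_next.
rewrite -(big_mkord xpredT (fun t => q t.+1 - q t)) telescope_sumr // normrM.
rewrite ger0_norm ?invr_ge0 // ler_piMr ?invr_ge0 //.
by have := q_01 T; have := q_01 0%N; rewrite ler_norml; lra.
Qed.
End Occupation.

Lemma reward_seqE (R : realType) (S : finType) (P : S -> bool -> S -> R) r N
    (pi : policy R S N) S0 T :
  reward_seq P r pi S0 T = lp_obj r (avg_occupation P pi S0 T).
Proof.
rewrite lp_obj_avg_occupation; congr Defs.cesaro; apply/funext => t.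
by rewrite -expect_t_lp_obj; apply: expect_t_ext => sv av; rewrite lp_obj_Yfrac.
Qed.

Lemma dIC_seqE (R : realType) (S : finType) (P : S -> bool -> S -> R) ystar N
    (pi : policy R S N) S0 T :
  dIC_seq P ystar pi S0 T = dIC ystar (avg_occupation P pi S0 T).
Proof.
rewrite dICE lp_obj_avg_occupation; congr Defs.cesaro; apply/funext => t.
by rewrite -expect_t_lp_obj; apply: expect_t_ext => sv av; rewrite dICE.
Qed.

Lemma avg_occupation_regret (R : realType) (S : finType) P (r : S -> bool -> R) alpha
    ystar (eps C : R) N K (pi : policy R S N) S0 T :
  is_kernel P -> lp_optimal P r alpha ystar -> 0 <= eps -> 0 <= C ->
  (forall u, lp_cone ystar u -> eps * l1norm u <= - lp_obj r u + C * lp_residual P u) ->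
  (0 < N)%N -> K%:R = alpha * N%:R -> valid_policy K pi -> (0 < T)%N ->
  eps * dIC ystar (avg_occupation P pi S0 T) + lp_obj r (avg_occupation P pi S0 T)
    <= lp_obj r ystar + C * #|S|%:R / T%:R.
Proof.
move=> P_kernel ystar_opt eps_ge0 C_ge0 error_bound N_gt0 K_eq pi_valid T_gt0.
set y := avg_occupation P pi S0 T.
have y_cone : lp_cone ystar (fun s a => y s a - ystar s a).
  by move=> s a ->; rewrite subr0 (avg_occupation_ge0 _ P_kernel pi_valid).
have flow_le : \sum_(s : S) `|lp_obj (flow_weight P s) y| <= #|S|%:R / T%:R.
  rewrite -sum1_card natr_sum mulr_suml; apply: ler_sum => s _.
  by rewrite mul1r (avg_occupation_flow _ P_kernel pi_valid N_gt0).
have := error_bound _ y_cone.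
rewrite lp_objB (lp_residual_sub ystar_opt)
  ?(avg_occupation_budget _ P_kernel pi_valid N_gt0 K_eq T_gt0)
  ?(avg_occupation_mass _ P_kernel pi_valid N_gt0 T_gt0) //.
have := ler_wpM2l eps_ge0 (dIC_le_l1norm ystar y).
have := ler_wpM2l C_ge0 flow_le.
rewrite -mulrA; lra.
Qed.

Lemma cvgn_le_add_inv (R : realType) (u : R^nat) (l c D : R) :
  (u @ \oo --> l)%classic -> (forall T, (0 < T)%N -> u T <= c + D / T%:R) -> l <= c.
Proof.
move=> u_cvg u_le; apply/ler_addgt0Pr => d d_gt0.
apply: (cvgr_to_le u_cvg); near=> T.
have T_gt0 : (0 < T)%N by near: T; exact: nbhs_infty_gt.
have : D / d < T%:R by near: T; exact: nbhs_infty_gtr.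
rewrite ltr_pdivrMr // => DT; apply: le_trans (u_le T T_gt0) _.
by rewrite lerD2l ler_pdivrMr ?ltr0n //; lra.
Unshelve. all: by end_near.
Qed.

Theorem mainTheorem9 (R : realType) (S : finType) (P : S -> bool -> S -> R)
  (r : S -> bool -> R) (alpha : R) (ystar : S -> bool -> R) :
  is_kernel P ->
  0 < alpha < 1 ->
  lp_optimal P r alpha ystar ->
  (forall y, lp_optimal P r alpha y -> forall s a, y s a = ystar s a) ->
  (forall s, 0 < ystar s true + ystar s false) ->
  exists eps0 : R, 0 < eps0 /\
    forall (N K : nat) (pi : policy R S N) (S0 : svec S N),
      (0 < N)%N -> K%:R = alpha * N%:R -> valid_policy K pi ->
      cvgn (reward_seq P r pi S0) ->
      cvgn (dIC_seq P ystar pi S0) ->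
      eps0 * limn (dIC_seq P ystar pi S0) <= lp_obj r ystar - limn (reward_seq P r pi S0).
Proof.
move=> P_kernel _ ystar_opt ystar_unique _.
have [eps [C [eps_gt0 C_ge0 error_bound]]] := lp_error_bound ystar_opt ystar_unique.
exists eps; split => // N K pi S0 N_gt0 K_eq pi_valid reward_cvg dIC_cvg.
suff : eps * limn (dIC_seq P ystar pi S0) + limn (reward_seq P r pi S0) <= lp_obj r ystar.
  by lra.
apply: (@cvgn_le_add_inv _
  (fun T => eps * dIC_seq P ystar pi S0 T + reward_seq P r pi S0 T) _ _ (C * #|S|%:R)).
  by apply: cvgD; [apply: cvgM; [exact: cvg_cst | exact: dIC_cvg] | exact: reward_cvg].
move=> T T_gt0; rewrite dIC_seqE reward_seqE.
exact: (avg_occupation_regret _ P_kernel ystar_opt (ltW eps_gt0) C_ge0 error_bound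
  N_gt0 K_eq pi_valid T_gt0).
Qed.
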